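(* Let $\{\mathfrak{U}_i: i\in I\}$ be a family of Banach algebras each of which is symmetrically pseudo-amenable. Then the direct sum $\bigoplus^p_{i\in I}\mathfrak{U}_i$ is symmetrically pseudo-amenable for every $p\ge1$ and for $p=0$.
   Context: For $1\le p<\infty$, $\bigoplus^p_{i\in I}\mathfrak{U}_i$ is the set of all $x\in\prod_{i\in I}\mathfrak{U}_i$ with $\|x\|_p=(\sum_{i}\|x(i)\|^p)^{1/p}<\infty$; $\bigoplus^0_{i\in I}\mathfrak{U}_i$ is the set of all $x\in\prod_i\mathfrak{U}_i$ with $\lim_i x(i)=0$ (i.e., for every $\varepsilon>0$, $\|x(i)\|<\varepsilon$ for all but finitely many $i$), normed by $\|x\|_\infty=\max_i\|x(i)\|$; these are Banach algebras under coordinatewise operations. For a Banach algebra $\mathfrak{U}$, $\mathfrak{U}\widehat{\otimes}\mathfrak{U}$ is the projective tensor product, with $a(b\otimes c)=ab\otimes c$, $(b\otimes c)a=b\otimes ca$, and $\pi(b\otimes c)=bc$ (extended linearly and continuously). The flip is $(b\otimes c)^{\circ}=c\otimes b$; $\mathbf{t}$ is symmetric if $\mathbf{t}^\circ=\mathbf{t}$. An approximate diagonal is a net $\{\mathbf{t}_\lambda\}$ in $\mathfrak{U}\widehat{\otimes}\mathfrak{U}$ (not necessarily bounded) with $a\mathbf{t}_\lambda-\mathbf{t}_\lambda a\to0$ and $\pi(\mathbf{t}_\lambda)a\to a$ for all $a\in\mathfrak{U}$. $\mathfrak{U}$ is symmetrically pseudo-amenable if it has an approximate diagonal consisting of symmetric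 elements. *)

From HB Require Import structures.
From mathcomp Require Import all_boot all_order all_algebra.
From Stdlib Require List.
From mathcomp Require Import complex.
From mathcomp Require Import boolp classical_sets reals exp.

Set Implicit Arguments.
Unset Strict Implicit.
Unset Printing Implicit Defensive.

Import Order.TTheory GRing.Theory Num.Theory.
Local Open Scope ring_scope.

(* Operations are explicit so that the same
   notions apply both to each U_i and to the direct sums, whose carrier is a
   subset of the dependent product. *)

Record alg_ops (R : realType) (A : Type) := AlgOps {
  o_add : A -> A -> A;
  o_opp : A -> A;
  o_zero : A;
  o_scale : R[i] -> A -> A;
  o_mul : A -> A -> A;
  o_norm : A -> R
}.

Record banach_algebra (R : realType) := BanachAlgebra {
  ba_car :> Type;
  ba_ops : alg_ops R ba_car;
  ba_addA : forall x y z, o_add ba_ops x (o_add ba_ops y z) = o_add ba_ops (o_add ba_ops x y) z;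
  ba_addC : forall x y, o_add ba_ops x y = o_add ba_ops y x;
  ba_add0 : forall x, o_add ba_ops (o_zero ba_ops) x = x;
  ba_addN : forall x, o_add ba_ops x (o_opp ba_ops x) = o_zero ba_ops;
  ba_scale1 : forall x, o_scale ba_ops 1 x = x;
  ba_scaleA : forall k l x, o_scale ba_ops k (o_scale ba_ops l x) = o_scale ba_ops (k * l) x;
  ba_scaleDr : forall k x y,
    o_scale ba_ops k (o_add ba_ops x y) = o_add ba_ops (o_scale ba_ops k x) (o_scale ba_ops k y);
  ba_scaleDl : forall k l x,
    o_scale ba_ops (k + l) x = o_add ba_ops (o_scale ba_ops k x) (o_scale ba_ops l x);
  ba_mulA : forall x y z, o_mul ba_ops x (o_mul ba_ops y z) = o_mul ba_ops (o_mul ba_ops x y) z;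
  ba_mulDl : forall x y z,
    o_mul ba_ops (o_add ba_ops x y) z = o_add ba_ops (o_mul ba_ops x z) (o_mul ba_ops y z);
  ba_mulDr : forall x y z,
    o_mul ba_ops x (o_add ba_ops y z) = o_add ba_ops (o_mul ba_ops x y) (o_mul ba_ops x z);
  ba_mulZl : forall k x y, o_mul ba_ops (o_scale ba_ops k x) y = o_scale ba_ops k (o_mul ba_ops x y);
  ba_mulZr : forall k x y, o_mul ba_ops x (o_scale ba_ops k y) = o_scale ba_ops k (o_mul ba_ops x y);
  ba_norm_eq0 : forall x, o_norm ba_ops x = 0 -> x = o_zero ba_ops;
  ba_normD : forall x y, o_norm ba_ops (o_add ba_ops x y) <= o_norm ba_ops x + o_norm ba_ops y;
  ba_normZ : forall k x, o_norm ba_ops (o_scale ba_ops k x) = Normc.normc k * o_norm ba_ops x;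
  ba_normM : forall x y, o_norm ba_ops (o_mul ba_ops x y) <= o_norm ba_ops x * o_norm ba_ops y;
  ba_complete : forall u : nat -> ba_car,
    (forall e : R, 0 < e -> exists N, forall m n, (N <= m)%N -> (N <= n)%N ->
        o_norm ba_ops (o_add ba_ops (u m) (o_opp ba_ops (u n))) < e) ->
    exists l, forall e : R, 0 < e -> exists N, forall n, (N <= n)%N ->
        o_norm ba_ops (o_add ba_ops (u n) (o_opp ba_ops l)) < e
}.

Section Tensors.
Variables (R : realType) (A : Type) (o : alg_ops R A) (S : A -> Prop).

(* Elements of the algebraic tensor product S (x) S, as finite formal sums
   sum_j b_j (x) c_j represented by lists of pairs. *)
Definition tensor := seq (A * A).

Definition tin (t : tensor) : Prop := List.Forall (fun x => S x.1 /\ S x.2) t.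

Definition bilin_on (phi : A -> A -> R[i]) : Prop :=
  (forall a a' b, S a -> S a' -> S b -> phi (o_add o a a') b = phi a b + phi a' b) /\
  (forall k a b, S a -> S b -> phi (o_scale o k a) b = k * phi a b) /\
  (forall a b b', S a -> S b -> S b' -> phi a (o_add o b b') = phi a b + phi a b') /\
  (forall k a b, S a -> S b -> phi a (o_scale o k b) = k * phi a b).

(* equality in the algebraic tensor product (universal property) *)
Definition teq (t t' : tensor) : Prop :=
  forall phi, bilin_on phi ->
    \sum_(x <- t) phi x.1 x.2 = \sum_(x <- t') phi x.1 x.2.

(* projective tensor norm of t is < e:
   inf { sum_j |b_j||c_j| : t = sum_j b_j (x) c_j } < e *)
Definition pnorm_lt (t : tensor) (e : R) : Prop :=
  exists t', tin t' /\ teq t t' /\ \sum_(x <- t') o_norm o x.1 * o_norm o x.2 < e.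

Definition tsub (t t' : tensor) : tensor := t ++ map (fun x => (o_opp o x.1, x.2)) t'.
Definition tlmul (a : A) (t : tensor) : tensor := map (fun x => (o_mul o a x.1, x.2)) t.
Definition trmul (t : tensor) (a : A) : tensor := map (fun x => (x.1, o_mul o x.2 a)) t.
Definition tflip (t : tensor) : tensor := map (fun x => (x.2, x.1)) t.
Definition tpi (t : tensor) : A := foldr (fun x acc => o_add o (o_mul o x.1 x.2) acc) (o_zero o) t.

(* Elements of the projective tensor product S (^x) S: the completion of the
   algebraic tensor product, i.e. Cauchy sequences (for the projective norm)
   of algebraic tensors. *)
Definition ptensor_seq (s : nat -> tensor) : Prop :=
  (forall k, tin (s k)) /\
  (forall e : R, 0 < e -> exists N, forall m n, (N <= m)%N -> (N <= n)%N ->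
      pnorm_lt (tsub (s m) (s n)) e).

Definition directed (D : Type) (le : D -> D -> Prop) : Prop :=
  inhabited D /\ (forall x, le x x) /\ (forall x y z, le x y -> le y z -> le x z) /\
  (forall x y, exists z, le x z /\ le y z).

Definition eventually (D : Type) (le : D -> D -> Prop) (P : D -> Prop) : Prop :=
  exists l0, forall l, le l0 l -> P l.

(* A symmetric approximate diagonal: a net (t_l) in S (^x) S, t_l = lim_k T l k,
   with t_l symmetric, a t_l - t_l a -> 0 and pi(t_l) a -> a for all a in S.
   (Norms of limits are limits of norms.) *)
Definition sym_approx_diagonal (D : Type) (le : D -> D -> Prop)
    (T : D -> nat -> tensor) : Prop :=
  directed le /\
  (forall l, ptensor_seq (T l)) /\
  (forall l (e : R), 0 < e -> exists N, forall k, (N <= k)%N ->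
      pnorm_lt (tsub (T l k) (tflip (T l k))) e) /\
  (forall a, S a -> forall e : R, 0 < e -> eventually le (fun l =>
      exists N, forall k, (N <= k)%N ->
        pnorm_lt (tsub (tlmul a (T l k)) (trmul (T l k) a)) e)) /\
  (forall a, S a -> forall e : R, 0 < e -> eventually le (fun l =>
      exists N, forall k, (N <= k)%N ->
        o_norm o (o_add o (o_mul o (tpi (T l k)) a) (o_opp o a)) < e)).

Definition sym_pseudo_amenable : Prop :=
  exists (D : Type) (le : D -> D -> Prop) (T : D -> nat -> tensor),
    sym_approx_diagonal le T.

End Tensors.

Section DirectSums.
Variables (R : realType) (I : Type) (U : I -> banach_algebra R).

Definition dprod := forall i, U i.

(* sum over all of I of a nonnegative family, as sup of finite partial sums *)
Definition fin_psums (f : I -> R) : set R :=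
  [set r | exists l : seq I, List.NoDup l /\ r = \sum_(i <- l) f i].

Definition ds_pow (p : R) (x : dprod) : I -> R :=
  fun i => powR (o_norm (ba_ops (U i)) (x i)) p.

Definition lp_set (p : R) : dprod -> Prop :=
  fun x => has_ubound (fin_psums (ds_pow p x)).

Definition lp_norm (p : R) (x : dprod) : R :=
  powR (sup (fin_psums (ds_pow p x))) (p^-1).

Definition c0_set : dprod -> Prop :=
  fun x => forall e : R, 0 < e -> exists l : seq I,
      forall i, e <= o_norm (ba_ops (U i)) (x i) -> List.In i l.

Definition c0_norm (x : dprod) : R :=
  sup [set r | exists i, r = o_norm (ba_ops (U i)) (x i)].

Definition ds_ops (nrm : dprod -> R) : alg_ops R dprod :=
  @AlgOps R dprod
    (fun x y i => o_add (ba_ops (U i)) (x i) (y i))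
    (fun x i => o_opp (ba_ops (U i)) (x i))
    (fun i => o_zero (ba_ops (U i)))
    (fun k x i => o_scale (ba_ops (U i)) k (x i))
    (fun x y i => o_mul (ba_ops (U i)) (x i) (y i))
    nrm.

End DirectSums.

Arguments lp_set {R I} U p x.
Arguments lp_norm {R I} U p x.
Arguments c0_set {R I} U x.
Arguments c0_norm {R I} U x.
Arguments ds_ops {R I} U nrm.

From Pilot Require Import Defs.
From mathcomp Require Import all_boot all_order all_algebra.
From mathcomp Require Import complex.
From mathcomp Require Import boolp classical_sets reals exp.
From mathcomp Require Import lra.
Set Implicit Arguments.
Unset Strict Implicit.
Unset Printing Implicit Defensive.
Import Order.TTheory GRing.Theory Num.Theory.
Local Open Scope ring_scope.

(* Fix finitely many elements a_1, ..., a_m of the direct sum and a tolerance e.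
   For the l^p norm as for the c_0 norm there are a finite set F of coordinates
   and d > 0 such that every x which is d-small on F and equal to -a_k off F has
   norm < e.  In each U_i, i in F, take an element of a symmetric approximate
   diagonal that works for a_1(i), ..., a_m(i) up to min(d, e / (2 (|F| + 1))),
   and embed the sum of these elements into the direct sum: the result is
   symmetric up to e, almost commutes with every a_k, and pi(t) a_k - a_k is
   d-small on F and equal to -a_k off F.  Indexing these elements by a finite
   set of elements and a precision 1/(n+1) gives the required net. *)

Section BanachAlgebraTheory.
Variables (R : realType) (B : banach_algebra R).
Local Notation add := (o_add (ba_ops B)).
Local Notation opp := (o_opp (ba_ops B)).
Local Notation zero := (o_zero (ba_ops B)).
Local Notation scale := (o_scale (ba_ops B)).
Local Notation mul := (o_mul (ba_ops B)).
Local Notation norm := (o_norm (ba_ops B)).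

Lemma ba_addr0 x : add x zero = x.
Proof. by rewrite ba_addC ba_add0. Qed.

Lemma ba_addIr x y z : add x y = add x z -> y = z.
Proof.
have addKl w : add (opp x) (add x w) = w.
  by rewrite ba_addA (ba_addC (opp x)) ba_addN ba_add0.
by move=> h; rewrite -(addKl y) h addKl.
Qed.

Lemma ba_addxx_eq0 x : add x x = x -> x = zero.
Proof. by move=> h; apply: (@ba_addIr x); rewrite h ba_addr0. Qed.

Lemma ba_scale0 x : scale 0 x = zero.
Proof. by apply: ba_addxx_eq0; rewrite -ba_scaleDl addr0. Qed.

Lemma ba_scaler0 k : scale k zero = zero.
Proof. by apply: ba_addxx_eq0; rewrite -ba_scaleDr ba_add0. Qed.

Lemma ba_mul0r x : mul zero x = zero.
Proof. by apply: ba_addxx_eq0; rewrite -ba_mulDl ba_add0. Qed.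

Lemma ba_mulr0 x : mul x zero = zero.
Proof. by apply: ba_addxx_eq0; rewrite -ba_mulDr ba_add0. Qed.

Lemma ba_oppE x : opp x = scale (-1) x.
Proof.
apply: (@ba_addIr x); rewrite ba_addN.
by rewrite -{1}(ba_scale1 x) -ba_scaleDl subrr ba_scale0.
Qed.

Lemma ba_opp0 : opp zero = zero.
Proof. by rewrite ba_oppE ba_scaler0. Qed.

Lemma ba_norm0 : norm zero = 0.
Proof. by rewrite -(ba_scale0 zero) ba_normZ Normc.normc0 mul0r. Qed.

Lemma ba_normN x : norm (opp x) = norm x.
Proof. by rewrite ba_oppE ba_normZ normcN Normc.normc1 mul1r. Qed.

Lemma ba_norm_ge0 x : 0 <= norm x.
Proof.
have := ba_normD x (opp x); rewrite ba_addN ba_norm0 ba_normN.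
by rewrite -mulr2n pmulrn_lge0.
Qed.

End BanachAlgebraTheory.

Section SeqIn.
Variable T : Type.

Lemma NoDup_cover (X : Type) (A : seq X) (P : X -> seq T -> Prop) :
  (forall a F F', List.incl F F' -> P a F -> P a F') ->
  (forall a, List.In a A -> exists F, P a F) ->
  exists F, List.NoDup F /\ forall a, List.In a A -> P a F.
Proof.
move=> monoP; elim: A => [|a A IH] exP.
  by exists [::]; split; [constructor | move=> a []].
have [Fa Pa] := exP a (or_introl erefl).
have [FA [_ PA]] := IH (fun b hb => exP b (or_intror hb)).
exists (List.nodup (fun x y : T => pselect (x = y)) (Fa ++ FA)).
split; first exact: List.NoDup_nodup.
move=> b /= [<-|hb]; [apply: monoP Pa | apply: monoP (PA b hb)] => j hj;
  apply/List.nodup_In/List.in_or_app; by [left | right].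
Qed.

Lemma size_filter_In (P : pred T) (G F : seq T) :
  List.NoDup G -> (forall j, P j -> List.In j F) ->
  (size [seq x <- G | P x] <= size F)%N.
Proof.
move=> ndG PF; apply/ssrnat.leP/List.NoDup_incl_length.
  exact: List.NoDup_filter.
by move=> j /List.filter_In [_ /PF].
Qed.

End SeqIn.

Section FiniteSums.
Variables (R : realType) (T : Type).

Lemma eq_sum_In (f g : T -> R) (l : seq T) :
  (forall j, List.In j l -> f j = g j) -> \sum_(j <- l) f j = \sum_(j <- l) g j.
Proof.
elim: l => [|x l IH] fg; first by rewrite !big_nil.
by rewrite !big_cons fg ?IH //; [move=> j hj; apply: fg; right | left].
Qed.

Lemma sum_single_le (f : T -> R) i (l : seq T) :
  (forall j, j <> i -> f j = 0) -> 0 <= f i -> List.NoDup l ->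
  \sum_(j <- l) f j <= f i.
Proof.
move=> f0 fi_ge0; elim: l => [|x l IH] nd; first by rewrite big_nil.
move/List.NoDup_cons_iff: nd => [xNl nd]; rewrite big_cons.
case: (pselect (x = i)) => [xi|xi]; last by rewrite f0 // add0r IH.
rewrite -xi (@eq_sum_In _ (fun=> 0)) ?big1 ?addr0 // => j jl.
by apply: f0 => ji; apply: xNl; rewrite xi -ji.
Qed.

Lemma sum_le_const (f : T -> R) (c : R) (l : seq T) :
  (forall j, List.In j l -> f j <= c) -> \sum_(j <- l) f j <= (size l)%:R * c.
Proof.
elim: l => [|x l IH] fc; first by rewrite big_nil mul0r.
rewrite big_cons /= -nat1r mulrDl mul1r lerD //; first by apply: fc; left.
by apply: IH => j hj; apply: fc; right.
Qed.

End FiniteSums.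

Lemma split_budget_le (R : realType) (c : R) (n : nat) : 0 < c ->
  c / 2 + n%:R * (c / 2 / (n%:R + 1)) <= c.
Proof.
move=> c0; have n1 : 0 < n%:R + 1 :> R by rewrite ltr_wpDl.
rewrite [leRHS]splitr lerD2l mulrA ler_pdivrMr // mulrC ler_wpM2l ?lerDl //.
by rewrite divr_ge0 // ltW.
Qed.

Lemma budget_gt0 (R : realType) (c : R) (n : nat) : 0 < c -> 0 < c / 2 / (n%:R + 1).
Proof. by move=> c0; rewrite !divr_gt0 // ltr_wpDl. Qed.

Definition inv_succ (R : realType) (n : nat) : R := n.+1%:R^-1.

Lemma inv_succ_gt0 (R : realType) n : 0 < inv_succ R n.
Proof. by rewrite invr_gt0 ltr0Sn. Qed.

Lemma inv_succ_le (R : realType) n m : (n <= m)%N -> inv_succ R m <= inv_succ R n.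
Proof. by move=> nm; rewrite lef_pV2 ?posrE ?ltr0Sn // ler_nat ltnS. Qed.

Lemma inv_succ_lt (R : realType) (e : R) : 0 < e -> exists n, inv_succ R n < e.
Proof.
move=> e0; exists (Num.Def.archi_bound e^-1); rewrite invf_plt ?posrE ?ltr0Sn //.
apply: lt_trans (archi_boundP _) _; first by rewrite invr_ge0 ltW.
by rewrite ltr_nat.
Qed.

Lemma directed_incl_leq (X : Type) :
  directed (fun x y : seq X * nat => List.incl x.1 y.1 /\ (x.2 <= y.2)%N).
Proof.
split; first by constructor; exact: ([::], 0%N).
split; first by move=> x; split => //; apply: List.incl_refl.
split.
  move=> x y z [xy1 xy2] [yz1 yz2]; split; first exact: List.incl_tran xy1 yz1.
  exact: leq_trans yz2.
move=> x y; exists (x.1 ++ y.1, maxn x.2 y.2); split; split => /=.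
- exact: List.incl_appl (List.incl_refl _).
- exact: leq_maxl.
- exact: List.incl_appr (List.incl_refl _).
- exact: leq_maxr.
Qed.

Section Nets.
Variables (T : Type) (le : T -> T -> Prop).
Hypothesis dirT : directed le.

Lemma eventually_and (P Q : T -> Prop) :
  Defs.eventually le P -> Defs.eventually le Q ->
  Defs.eventually le (fun l => P l /\ Q l).
Proof.
case: dirT => _ [_ [trans ub]] [l1 h1] [l2 h2]; have [z [z1 z2]] := ub l1 l2.
by exists z => l zl; split; [apply: h1 | apply: h2]; apply: trans zl.
Qed.

Lemma eventually_all_In (X : Type) (P : X -> T -> Prop) (A : seq X) :
  (forall a, List.In a A -> Defs.eventually le (P a)) ->
  Defs.eventually le (fun l => forall a, List.In a A -> P a l).
Proof.
elim: A => [|a A IH] evP.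
  by case: dirT => [[l0] _]; exists l0 => l _ a [].
have [l0 hl] := eventually_and (evP a (or_introl erefl))
  (IH (fun b hb => evP b (or_intror hb))).
by exists l0 => l /hl [Pa PA] b /= [<-|hb] //; apply: PA.
Qed.

End Nets.

Lemma bound_all_In (T : Type) (F : seq T) (Q : T -> nat -> Prop) :
  (forall i N N', (N <= N')%N -> Q i N -> Q i N') ->
  (forall i, List.In i F -> exists N, Q i N) ->
  exists N, forall i, List.In i F -> Q i N.
Proof.
move=> monoQ; elim: F => [|i F IH] exQ; first by exists 0%N.
have [N1 h1] := exQ i (or_introl erefl).
have [N2 h2] := IH (fun j hj => exQ j (or_intror hj)).
exists (maxn N1 N2) => j /= [<-|hj].
  by apply: monoQ h1; apply: leq_maxl.
by apply: monoQ (h2 j hj); apply: leq_maxr.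
Qed.

Section TensorEstimates.
Variables (R : realType) (A : Type) (o : alg_ops R A) (S : A -> Prop).

Lemma pnorm_teq t t' e : teq o S t t' -> pnorm_lt o S t' e -> pnorm_lt o S t e.
Proof.
move=> tt' [u [uS [t'u ue]]]; exists u; do !split => //.
by move=> phi phiB; rewrite tt' // t'u.
Qed.

Lemma pnorm_le t e e' : pnorm_lt o S t e -> e <= e' -> pnorm_lt o S t e'.
Proof.
by move=> [u [uS [tu ue]]] ee'; exists u; do !split => //; apply: lt_le_trans ee'.
Qed.

Lemma pnorm_nil e : 0 < e -> pnorm_lt o S [::] e.
Proof. by move=> e0; exists [::]; do !split; [constructor | rewrite big_nil]. Qed.

Lemma pnorm_cat t t' e e' : pnorm_lt o S t e -> pnorm_lt o S t' e' ->
  pnorm_lt o S (t ++ t') (e + e').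
Proof.
move=> [u [uS [tu ue]]] [u' [u'S [tu' ue']]]; exists (u ++ u'); split.
  exact/List.Forall_app.
split; first by move=> phi phiB; rewrite !big_cat /= tu // tu'.
by rewrite big_cat /= ltrD.
Qed.

Lemma sym_approx_diagonal_seq (As : seq A) (eta : R) :
  0 < eta -> (forall a, List.In a As -> S a) -> sym_pseudo_amenable o S ->
  exists s : nat -> tensor A, ptensor_seq o S s /\
   (forall e, 0 < e -> exists N, forall k, (N <= k)%N ->
      pnorm_lt o S (tsub o (s k) (tflip (s k))) e) /\
   (forall a, List.In a As -> exists N, forall k, (N <= k)%N ->
      pnorm_lt o S (tsub o (tlmul o a (s k)) (trmul o (s k) a)) eta /\
      o_norm o (o_add o (o_mul o (tpi o (s k)) a) (o_opp o a)) < eta).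
Proof.
move=> eta0 AsS [D [le [T [dirD [Tseq [Tsym [Tcomm Tunit]]]]]]].
have [l0 hl0] := @eventually_all_In _ _ dirD _ _ As (fun a aAs => eventually_and dirD
    (Tcomm a (AsS a aAs) eta eta0) (Tunit a (AsS a aAs) eta eta0)).
exists (T l0); split; first exact: Tseq.
split; first exact: Tsym.
move=> a /(hl0 l0 (proj1 (proj2 dirD) l0)) [[N1 h1] [N2 h2]].
exists (maxn N1 N2) => k hk; split; [apply: h1 | apply: h2];
  by apply: leq_trans hk; rewrite (leq_maxl, leq_maxr).
Qed.

End TensorEstimates.

Section Injection.
Variables (R : realType) (I : Type) (U : I -> banach_algebra R).
Local Notation ops i := (ba_ops (U i)).

Definition ds_inj (i : I) (b : U i) : dprod U := fun j =>
  match pselect (i = j) with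
  | left e => eq_rect i (fun k => ba_car (U k)) b j e
  | right _ => o_zero (ops j)
  end.
Arguments ds_inj {i} b _.

Lemma ds_inj_id i (b : U i) : ds_inj b i = b.
Proof.
rewrite /ds_inj; case: pselect => [e|]; last by case.
by rewrite (Prop_irrelevance e erefl).
Qed.

Lemma ds_inj_ne i j (b : U i) : i <> j -> ds_inj b j = o_zero (ops j).
Proof. by rewrite /ds_inj; case: pselect. Qed.

Lemma ds_inj_map1 (f : forall k, U k -> U k) i (b : U i) :
  (forall k, f k (o_zero (ops k)) = o_zero (ops k)) ->
  ds_inj (f i b) = fun j => f j (ds_inj b j).
Proof.
move=> f0; apply: functional_extensionality_dep => j.
by rewrite /ds_inj; case: pselect => [e|]; [case: j / e | rewrite f0].
Qed.

Lemma ds_inj_map2 (f : forall k, U k -> U k -> U k) i (b c : U i) :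
  (forall k, f k (o_zero (ops k)) (o_zero (ops k)) = o_zero (ops k)) ->
  ds_inj (f i b c) = fun j => f j (ds_inj b j) (ds_inj c j).
Proof.
move=> f0; apply: functional_extensionality_dep => j.
by rewrite /ds_inj; case: pselect => [e|]; [case: j / e | rewrite f0].
Qed.

Definition ds_injT i (t : tensor (U i)) : tensor (dprod U) :=
  map (fun x => (ds_inj x.1, ds_inj x.2)) t.
Arguments ds_injT {i} t.

Definition ds_sumT (F : seq I) (X : forall i, tensor (U i)) : tensor (dprod U) :=
  flatten (map (fun i => ds_injT (X i)) F).

Lemma ds_sumT_cons i F X : ds_sumT (i :: F) X = ds_injT (X i) ++ ds_sumT F X.
Proof. by []. Qed.

End Injection.
Arguments ds_inj {R I U i} b _.
Arguments ds_injT {R I U i} t.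
Arguments ds_sumT {R I U} F X.

Section DirectSum.
Variables (R : realType) (I : Type) (U : I -> banach_algebra R).
Local Notation D := (dprod U).
Local Notation ops i := (ba_ops (U i)).
Local Notation T := (fun _ => True).
Variables (N : D -> R) (S : D -> Prop).
Local Notation O := (ds_ops U N).
Hypothesis ds_inj_in : forall i (b : U i), S (ds_inj b).
Hypothesis ds_inj_norm : forall i (b : U i), N (ds_inj b) <= o_norm (ops i) b.
Hypothesis ds_inj_norm_ge0 : forall i (b : U i), 0 <= N (ds_inj b).

Lemma ds_injD i (b c : U i) : ds_inj (o_add (ops i) b c) = o_add O (ds_inj b) (ds_inj c).
Proof. by rewrite (@ds_inj_map2 _ _ U (fun k => o_add (ops k))) // => k; rewrite ba_add0. Qed.

Lemma ds_injZ i k (b : U i) : ds_inj (o_scale (ops i) k b) = o_scale O k (ds_inj b).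
Proof.
by rewrite (@ds_inj_map1 _ _ U (fun j => o_scale (ops j) k)) // => j; rewrite ba_scaler0.
Qed.

Lemma ds_injN i (b : U i) : ds_inj (o_opp (ops i) b) = o_opp O (ds_inj b).
Proof. by rewrite (@ds_inj_map1 _ _ U (fun j => o_opp (ops j))) // => j; rewrite ba_opp0. Qed.

Lemma ds_inj_mull (a : D) i (b : U i) : ds_inj (o_mul (ops i) (a i) b) = o_mul O a (ds_inj b).
Proof.
by rewrite (@ds_inj_map1 _ _ U (fun j => o_mul (ops j) (a j))) // => j; rewrite ba_mulr0.
Qed.

Lemma ds_inj_mulr (a : D) i (b : U i) : ds_inj (o_mul (ops i) b (a i)) = o_mul O (ds_inj b) a.
Proof.
by rewrite (@ds_inj_map1 _ _ U (fun j x => o_mul (ops j) x (a j))) // => j; rewrite ba_mul0r.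
Qed.

Lemma bilin_ds_inj phi i : bilin_on O S phi ->
  bilin_on (ops i) T (fun b c => phi (ds_inj b) (ds_inj c)).
Proof.
move=> [phiDl [phiZl [phiDr phiZr]]]; do ![split].
- by move=> a a' b _ _ _; rewrite ds_injD phiDl.
- by move=> k a b _ _; rewrite ds_injZ phiZl.
- by move=> a b b' _ _ _; rewrite ds_injD phiDr.
- by move=> k a b _ _; rewrite ds_injZ phiZr.
Qed.

Lemma tin_ds_injT i (t : tensor (U i)) : tin S (ds_injT t).
Proof. by elim: t => [|x t IH]; constructor => //; split; apply: ds_inj_in. Qed.

Lemma tin_ds_sumT (F : seq I) (X : forall i, tensor (U i)) : tin S (ds_sumT F X).
Proof.
elim: F => [|i F IH]; first by constructor.
by apply/List.Forall_app; split => //; apply: tin_ds_injT.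
Qed.

Lemma pnorm_ds_injT i (t : tensor (U i)) e :
  pnorm_lt (ops i) T t e -> pnorm_lt O S (ds_injT t) e.
Proof.
move=> [u [_ [tu ue]]]; exists (ds_injT u); split; first exact: tin_ds_injT.
split; first by move=> phi phiB; rewrite !big_map; exact: (tu _ (@bilin_ds_inj phi i phiB)).
apply: le_lt_trans ue; rewrite big_map; apply: ler_sum => x _.
by apply: ler_pM; rewrite ?ds_inj_norm_ge0 ?ds_inj_norm.
Qed.

Lemma pnorm_ds_sumT (F : seq I) (X : forall i, tensor (U i)) e0 eps : 0 < e0 ->
  (forall i, List.In i F -> pnorm_lt (ops i) T (X i) eps) ->
  pnorm_lt O S (ds_sumT F X) (e0 + (size F)%:R * eps).
Proof.
move=> e0_gt0; elim: F => [|i F IH] XF; first by rewrite mul0r addr0; apply: pnorm_nil.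
rewrite ds_sumT_cons; apply: (@pnorm_le _ _ _ _ _ (eps + (e0 + (size F)%:R * eps))).
  apply: pnorm_cat; first by apply: pnorm_ds_injT; apply: XF; left.
  by apply: IH => j hj; apply: XF; right.
by rewrite /= -nat1r mulrDl mul1r addrCA.
Qed.

Lemma tflip_ds_sumT (F : seq I) (X : forall i, tensor (U i)) :
  tflip (ds_sumT F X) = ds_sumT F (fun i => tflip (X i)).
Proof.
elim: F => [|i F IH] //; rewrite !ds_sumT_cons -IH /tflip map_cat.
by rewrite /ds_injT -!map_comp.
Qed.

Lemma tlmul_ds_sumT (a : D) (F : seq I) (X : forall i, tensor (U i)) :
  tlmul O a (ds_sumT F X) = ds_sumT F (fun i => tlmul (ops i) (a i) (X i)).
Proof.
elim: F => [|i F IH] //; rewrite !ds_sumT_cons -IH /tlmul map_cat /ds_injT -!map_comp.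
by congr (_ ++ _); apply: eq_map => x /=; rewrite ds_inj_mull.
Qed.

Lemma trmul_ds_sumT (a : D) (F : seq I) (X : forall i, tensor (U i)) :
  trmul O (ds_sumT F X) a = ds_sumT F (fun i => trmul (ops i) (X i) (a i)).
Proof.
elim: F => [|i F IH] //; rewrite !ds_sumT_cons -IH /trmul map_cat /ds_injT -!map_comp.
by congr (_ ++ _); apply: eq_map => x /=; rewrite ds_inj_mulr.
Qed.

Lemma big_ds_sumT (phi : D -> D -> R[i]) (F : seq I) (X : forall i, tensor (U i)) :
  \sum_(x <- ds_sumT F X) phi x.1 x.2 =
  \sum_(i <- F) \sum_(x <- X i) phi (ds_inj x.1) (ds_inj x.2).
Proof.
by elim: F => [|i F IH]; rewrite ?big_nil // ds_sumT_cons big_cat big_cons IH big_map.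
Qed.

Lemma tsub_ds_sumT (F : seq I) (X Y : forall i, tensor (U i)) :
  teq O S (tsub O (ds_sumT F X) (ds_sumT F Y)) (ds_sumT F (fun i => tsub (ops i) (X i) (Y i))).
Proof.
have oppT : map (fun x => (o_opp O x.1, x.2)) (ds_sumT F Y) =
    ds_sumT F (fun i => map (fun x => (o_opp (ops i) x.1, x.2)) (Y i)).
  elim: F => [|i F IH] //; rewrite !ds_sumT_cons map_cat IH /ds_injT -!map_comp.
  by congr (_ ++ _); apply: eq_map => x /=; rewrite ds_injN.
move=> phi _; rewrite /tsub big_cat /= oppT !big_ds_sumT -big_split /=.
by apply: eq_bigr => i _; rewrite big_cat.
Qed.

Lemma pnorm_tsub_ds_sumT (F : seq I) (X Y : forall i, tensor (U i)) e : 0 < e ->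
  (forall i, List.In i F ->
     pnorm_lt (ops i) T (tsub (ops i) (X i) (Y i)) (e / 2 / ((size F)%:R + 1))) ->
  pnorm_lt O S (tsub O (ds_sumT F X) (ds_sumT F Y)) e.
Proof.
move=> e0 XY; apply: pnorm_teq (tsub_ds_sumT F X Y) _.
by apply: pnorm_le (split_budget_le (size F) e0); apply: pnorm_ds_sumT => //; rewrite divr_gt0.
Qed.

Lemma tpi_coord (t : tensor D) j :
  tpi O t j = tpi (ops j) (map (fun x => (x.1 j, x.2 j)) t).
Proof. by elim: t => [|x t IH] //=; rewrite IH. Qed.

Lemma tpi_cat j (t t' : tensor (U j)) :
  tpi (ops j) (t ++ t') = o_add (ops j) (tpi (ops j) t) (tpi (ops j) t').
Proof. by elim: t => [|x t IH] /=; rewrite ?ba_add0 // IH ba_addA. Qed.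

Lemma tpi_ds_injT_ne i j (t : tensor (U i)) : i <> j ->
  tpi O (ds_injT t) j = o_zero (ops j).
Proof.
move=> ij; rewrite tpi_coord.
by elim: t => [|x t IH] //=; rewrite IH !ds_inj_ne // ba_mul0r ba_add0.
Qed.

Lemma tpi_ds_injT_id j (t : tensor (U j)) : tpi O (ds_injT t) j = tpi (ops j) t.
Proof. by rewrite tpi_coord; elim: t => [|[b c] t IH] //=; rewrite IH !ds_inj_id. Qed.

Lemma tpi_ds_sumT_notin (F : seq I) (X : forall i, tensor (U i)) j :
  ~ List.In j F -> tpi O (ds_sumT F X) j = o_zero (ops j).
Proof.
elim: F => [|i F IH] //= jF; rewrite ds_sumT_cons tpi_coord map_cat tpi_cat -!tpi_coord.
rewrite tpi_ds_injT_ne; last by move=> ij; apply: jF; left.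
by rewrite ba_add0 IH // => jF'; apply: jF; right.
Qed.

Lemma tpi_ds_sumT_in (F : seq I) (X : forall i, tensor (U i)) j : List.NoDup F -> List.In j F ->
  tpi O (ds_sumT F X) j = tpi (ops j) (X j).
Proof.
elim: F => [|i F IH] //= /List.NoDup_cons_iff [iF ndF] jF.
rewrite ds_sumT_cons tpi_coord map_cat tpi_cat -!tpi_coord.
case: jF => [ij|jF]; last by rewrite tpi_ds_injT_ne ?ba_add0 ?IH // => ij; apply: iF; rewrite ij.
by clear IH; case: j / ij; rewrite tpi_ds_injT_id tpi_ds_sumT_notin // ba_addr0.
Qed.

Lemma ptensor_seq_ds_sumT (F : seq I) (s : forall i, nat -> tensor (U i)) :
  (forall i, ptensor_seq (ops i) T (s i)) ->
  ptensor_seq O S (fun k => ds_sumT F (fun i => s i k)).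
Proof.
move=> sC; split=> [k|e e0]; first exact: tin_ds_sumT.
have [|| M hM] := @bound_all_In _ F (fun i M => forall m k, (M <= m)%N -> (M <= k)%N ->
    pnorm_lt (ops i) T (tsub (ops i) (s i m) (s i k)) (e / 2 / ((size F)%:R + 1))).
- by move=> i M M' MM' h m k hm hk; apply: h; apply: leq_trans hm || apply: leq_trans hk.
- by move=> i _; apply: (proj2 (sC i)); exact: budget_gt0.
by exists M => m k hm hk; apply: pnorm_tsub_ds_sumT => // i iF; apply: hM.
Qed.

Lemma sym_ds_sumT (F : seq I) (s : forall i, nat -> tensor (U i)) :
  (forall i e, 0 < e -> exists M, forall k, (M <= k)%N ->
     pnorm_lt (ops i) T (tsub (ops i) (s i k) (tflip (s i k))) e) ->
  forall e, 0 < e -> exists M, forall k, (M <= k)%N ->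
     pnorm_lt O S (tsub O (ds_sumT F (fun i => s i k)) (tflip (ds_sumT F (fun i => s i k)))) e.
Proof.
move=> sSym e e0.
have [|| M hM] := @bound_all_In _ F (fun i M => forall k, (M <= k)%N ->
    pnorm_lt (ops i) T (tsub (ops i) (s i k) (tflip (s i k))) (e / 2 / ((size F)%:R + 1))).
- by move=> i M M' MM' h k hk; apply: h; apply: leq_trans hk.
- by move=> i _; apply: sSym; exact: budget_gt0.
by exists M => k hk; rewrite tflip_ds_sumT; apply: pnorm_tsub_ds_sumT => // i iF; apply: hM.
Qed.

Hypothesis small_tail : forall (A : seq D) (e : R), 0 < e -> exists (F : seq I) (d : R),
  List.NoDup F /\ 0 < d /\
  forall a, List.In a A -> S a -> forall x : D,
    (forall j, List.In j F -> o_norm (ops j) (x j) < d) ->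
    (forall j, ~ List.In j F -> x j = o_opp (ops j) (a j)) -> N x < e.

Hypothesis sym_pseudo_amenable_ops : forall i, sym_pseudo_amenable (ops i) T.

Lemma ds_sym_diagonal_seq (A : seq D) (e : R) : 0 < e ->
  exists s : nat -> tensor D, ptensor_seq O S s /\
   (forall e', 0 < e' -> exists M, forall k, (M <= k)%N ->
      pnorm_lt O S (tsub O (s k) (tflip (s k))) e') /\
   (forall a, List.In a A -> S a -> exists M, forall k, (M <= k)%N ->
      pnorm_lt O S (tsub O (tlmul O a (s k)) (trmul O (s k) a)) e /\
      N (o_add O (o_mul O (tpi O (s k)) a) (o_opp O a)) < e).
Proof.
move=> e0; have [F [d [ndF [d0 tailF]]]] := small_tail A e0.
pose eta := Num.min d (e / 2 / ((size F)%:R + 1)).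
have eta0 : 0 < eta by rewrite lt_min d0 budget_gt0.
have /(_ _)/cid sC i := sym_approx_diagonal_seq (As := [seq a i | a <- A]) eta0
  (fun _ _ => Logic.I) (sym_pseudo_amenable_ops i).
pose s i := proj1_sig (sC i).
have sP i := proj2_sig (sC i).
exists (fun k => ds_sumT F (fun i => s i k)); split.
  by apply: ptensor_seq_ds_sumT => i; case: (sP i).
split; first by apply: sym_ds_sumT => i; case: (sP i) => _ [].
move=> a aA aS.
have [|| M hM] := @bound_all_In _ F (fun i M => forall k, (M <= k)%N ->
    pnorm_lt (ops i) T
      (tsub (ops i) (tlmul (ops i) (a i) (s i k)) (trmul (ops i) (s i k) (a i))) eta /\
    o_norm (ops i)
      (o_add (ops i) (o_mul (ops i) (tpi (ops i) (s i k)) (a i)) (o_opp (ops i) (a i))) < eta).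
- by move=> i M M' MM' h k hk; apply: h; apply: leq_trans hk.
- by move=> i _; case: (sP i) => _ [_]; apply; apply: List.in_map.
exists M => k hk; split.
  rewrite tlmul_ds_sumT trmul_ds_sumT; apply: pnorm_tsub_ds_sumT => // i iF.
  by apply: pnorm_le (proj1 (hM i iF k hk)) _; rewrite ge_min lexx orbT.
apply: (tailF a aA aS) => j jF /=; last by rewrite tpi_ds_sumT_notin // ba_mul0r ba_add0.
rewrite tpi_ds_sumT_in //; apply: lt_le_trans (proj2 (hM j jF k hk)) _.
by rewrite ge_min lexx.
Qed.

Definition ds_diagonal (x : seq D * nat) : nat -> tensor D :=
  proj1_sig (cid (ds_sym_diagonal_seq x.1 (inv_succ_gt0 R x.2))).

Lemma ds_sym_pseudo_amenable : sym_pseudo_amenable O S.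
Proof.
pose le (x y : seq D * nat) := List.incl x.1 y.1 /\ (x.2 <= y.2)%N.
exists (seq D * nat)%type, le, ds_diagonal.
have dP x := proj2_sig (cid (ds_sym_diagonal_seq x.1 (inv_succ_gt0 R x.2))).
have eventually_good a e : S a -> 0 < e -> Defs.eventually le (fun l =>
    exists M, forall k, (M <= k)%N ->
      pnorm_lt O S (tsub O (tlmul O a (ds_diagonal l k)) (trmul O (ds_diagonal l k) a)) e /\
      N (o_add O (o_mul O (tpi O (ds_diagonal l k)) a) (o_opp O a)) < e).
  move=> aS e0; have [n0 n0e] := inv_succ_lt e0.
  exists ([:: a], n0) => l [al n0l]; have [_ [_ /(_ a (al a (or_introl erefl)) aS) [M hM]]] := dP l.
  have le_e : inv_succ R l.2 <= e by apply: le_trans (inv_succ_le R n0l) (ltW n0e).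
  by exists M => k /hM [h1 h2]; split; [apply: pnorm_le h1 le_e | apply: lt_le_trans h2 le_e].
split; [exact: directed_incl_leq | split; [|split; [|split]]].
- by move=> x; case: (dP x).
- by move=> x; case: (dP x) => _ [].
- move=> a aS e e0; have [l0 hl0] := eventually_good a e aS e0.
  by exists l0 => l /hl0 [M hM]; exists M => k /hM [].
- move=> a aS e e0; have [l0 hl0] := eventually_good a e aS e0.
  by exists l0 => l /hl0 [M hM]; exists M => k /hM [].
Qed.

End DirectSum.

Section C0Sum.
Variables (R : realType) (I : Type) (U : I -> banach_algebra R).
Local Notation D := (dprod U).
Local Notation ops i := (ba_ops (U i)).

Lemma c0_ds_inj i (b : U i) : c0_set U (ds_inj b).
Proof.
move=> e e0; exists [:: i] => j; case: (pselect (i = j)) => [<-|ij]; first by left.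
by rewrite ds_inj_ne // ba_norm0 => /(lt_le_trans e0); rewrite ltxx.
Qed.

Lemma c0_ds_inj_has_sup i (b : U i) :
  has_sup [set r | exists j, r = o_norm (ops j) (ds_inj b j)].
Proof.
split; first by exists (o_norm (ops i) (ds_inj b i)), i.
exists (o_norm (ops i) b) => r [j ->].
case: (pselect (i = j)) => [ij|ij]; last by rewrite ds_inj_ne // ba_norm0 ba_norm_ge0.
by case: j / ij; rewrite ds_inj_id.
Qed.

Lemma c0_norm_ds_inj i (b : U i) : c0_norm U (ds_inj b) <= o_norm (ops i) b.
Proof.
apply: ge_sup; first by case: (c0_ds_inj_has_sup b).
move=> r [j ->]; case: (pselect (i = j)) => [ij|ij].
  by case: j / ij; rewrite ds_inj_id.
by rewrite ds_inj_ne // ba_norm0 ba_norm_ge0.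
Qed.

Lemma c0_norm_ds_inj_ge0 i (b : U i) : 0 <= c0_norm U (ds_inj b).
Proof.
apply: le_trans (ba_norm_ge0 (ds_inj b i)) _.
by apply: sup_upper_bound; [exact: c0_ds_inj_has_sup | exists i].
Qed.

Lemma c0_small_tail (A : seq D) (e : R) : 0 < e -> exists (F : seq I) (d : R),
  List.NoDup F /\ 0 < d /\
  forall a, List.In a A -> c0_set U a -> forall x : D,
    (forall j, List.In j F -> o_norm (ops j) (x j) < d) ->
    (forall j, ~ List.In j F -> x j = o_opp (ops j) (a j)) -> c0_norm U x < e.
Proof.
move=> e0; have e20 : 0 < e / 2 by rewrite divr_gt0.
have [||F [ndF largeF]] := @NoDup_cover _ _ A (fun a F => c0_set U a ->
    forall j, e / 2 <= o_norm (ops j) (a j) -> List.In j F).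
- by move=> a F F' FF' h aC j /(h aC); apply: FF'.
- move=> a _; case: (pselect (c0_set U a)) => [aC|aNC]; last by exists [::].
  by have [l hl] := aC _ e20; exists l.
exists F, (e / 2); split => //; split => // a aA aC x xF xFc.
have x_lt j : o_norm (ops j) (x j) < e / 2.
  case: (pselect (List.In j F)) => [jF|jF]; first exact: xF.
  rewrite xFc // ba_normN ltNge; apply/negP => /(largeF a aA aC j); exact: jF.
apply: le_lt_trans (_ : _ <= e / 2) _; last by rewrite ltr_pdivrMr // ltr_pMr // ltr1n.
case: (pselect (exists j : I, True)) => [[j0 _]|noI].
  apply: ge_sup; first by exists (o_norm (ops j0) (x j0)), j0.
  by move=> r [j ->]; apply: ltW.
rewrite /c0_norm (_ : [set r | exists j, r = o_norm (ops j) (x j)]%classic = set0) ?sup0 ?ltW //.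
by rewrite predeqE => r; split => // [[j _]]; apply: noI; exists j.
Qed.

End C0Sum.

Section LpSum.
Variables (R : realType) (I : Type) (U : I -> banach_algebra R).
Local Notation D := (dprod U).
Local Notation ops i := (ba_ops (U i)).
Variables (p : R) (p_ge1 : 1 <= p).

Let p_gt0 : 0 < p. Proof. exact: lt_le_trans ltr01 p_ge1. Qed.

Let powRK (x : R) : 0 <= x -> powR (powR x p) p^-1 = x.
Proof. by move=> x0; rewrite -powRrM mulfV ?gt_eqF // powRr1. Qed.

Let powRVK (x : R) : 0 <= x -> powR (powR x p^-1) p = x.
Proof. by move=> x0; rewrite -powRrM mulVf ?gt_eqF // powRr1. Qed.

Let E (x : D) := fin_psums (ds_pow p x).

Let E0 (x : D) : E x 0.
Proof. by exists [::]; split; [constructor | rewrite big_nil]. Qed.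

Let sup_ge0 (x : D) : has_ubound (E x) -> 0 <= sup (E x).
Proof. by move=> h; apply: sup_upper_bound; [split => //; exists 0; apply: E0 | apply: E0]. Qed.

Let ds_inj_ubound i (b : U i) : ubound (E (ds_inj b)) (ds_pow p (ds_inj b) i).
Proof.
move=> r [l [ndl ->]]; apply: sum_single_le => //; last exact: powR_ge0.
by move=> j ji; rewrite /ds_pow ds_inj_ne ?ba_norm0 ?powR0 ?gt_eqF // => ij; apply: ji.
Qed.

Lemma lp_ds_inj i (b : U i) : lp_set U p (ds_inj b).
Proof. by exists (ds_pow p (ds_inj b) i); apply: ds_inj_ubound. Qed.

Lemma lp_norm_ds_inj i (b : U i) : lp_norm U p (ds_inj b) <= o_norm (ops i) b.
Proof.
rewrite /lp_norm -(powRK (ba_norm_ge0 b)).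
apply: ge0_ler_powR; first by rewrite invr_ge0 ltW.
- by rewrite nnegrE; apply: sup_ge0; apply: lp_ds_inj.
- by rewrite nnegrE powR_ge0.
apply: ge_sup; first by exists 0; apply: E0.
by have := @ds_inj_ubound i b; rewrite /ds_pow ds_inj_id.
Qed.

Lemma lp_norm_ds_inj_ge0 i (b : U i) : 0 <= lp_norm U p (ds_inj b).
Proof. exact: powR_ge0. Qed.

Lemma lp_sum_outside_lt (a : D) (eta : R) : lp_set U p a -> 0 < eta ->
  exists F, forall G, List.NoDup G -> (forall j, List.In j G -> ~ List.In j F) ->
    \sum_(j <- G) ds_pow p a j < eta.
Proof.
move=> aL eta0; have supE : has_sup (E a) by split => //; exists 0; apply: E0.
have [_ [F [ndF ->]] supF] := sup_adherent eta0 supE.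
exists F => G ndG GF.
have : \sum_(j <- F ++ G) ds_pow p a j <= sup (E a).
  apply: sup_upper_bound => //; exists (F ++ G); split => //.
  by apply: List.NoDup_app => // j jF jG; apply: (GF j jG).
by rewrite big_cat /=; lra.
Qed.

Lemma lp_norm_lt (x : D) (c e : R) : 0 < e ->
  (forall G, List.NoDup G -> \sum_(j <- G) ds_pow p x j <= c) -> c < powR e p ->
  lp_norm U p x < e.
Proof.
move=> e0 xc ce; have supc : sup (E x) <= c.
  by apply: ge_sup; [exists 0; apply: E0 | move=> r [G [ndG ->]]; apply: xc].
rewrite /lp_norm -(powRK (ltW e0)); apply: gt0_ltr_powR; first by rewrite invr_gt0.
- by rewrite nnegrE; apply: sup_ge0; exists c => r [G [ndG ->]]; apply: xc.
- by rewrite nnegrE powR_ge0.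
exact: le_lt_trans ce.
Qed.

Lemma lp_small_tail (A : seq D) (e : R) : 0 < e -> exists (F : seq I) (d : R),
  List.NoDup F /\ 0 < d /\
  forall a, List.In a A -> lp_set U p a -> forall x : D,
    (forall j, List.In j F -> o_norm (ops j) (x j) < d) ->
    (forall j, ~ List.In j F -> x j = o_opp (ops j) (a j)) -> lp_norm U p x < e.
Proof.
move=> e0; pose c := powR e p / 2.
have c0 : 0 < c by rewrite divr_gt0 // powR_gt0.
have [||F [ndF smallF]] := @NoDup_cover _ _ A (fun a F => lp_set U p a ->
    forall G, List.NoDup G -> (forall j, List.In j G -> ~ List.In j F) ->
      \sum_(j <- G) ds_pow p a j < c / 2).
- by move=> a F F' FF' h aL G ndG GF'; apply: h => // j jG jF; apply: (GF' j jG (FF' j jF)).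
- move=> a _; case: (pselect (lp_set U p a)) => [aL|aNL]; last by exists [::].
  by have [F hF] := lp_sum_outside_lt aL (divr_gt0 c0 (ltr0Sn _ 1)); exists F.
pose dp := c / 2 / ((size F)%:R + 1).
have dp0 : 0 < dp := budget_gt0 (size F) c0.
exists F, (powR dp p^-1); do !split => //; first by rewrite powR_gt0.
move=> a aA aL x xF xFc; apply: (lp_norm_lt e0 (c := c)); last first.
  by rewrite /c ltr_pdivrMr // ltr_pMr ?powR_gt0 // ltr1n.
move=> G ndG; rewrite (bigID (fun j => `[< List.In j F >])) /= addrC.
apply: le_trans (split_budget_le (size F) c0); apply: lerD.
  rewrite -big_filter (@eq_sum_In _ _ _ (ds_pow p a)); last first.
    by move=> j /List.filter_In [_ /asboolP jF]; rewrite /ds_pow xFc // ba_normN.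
  apply/ltW/(smallF a aA aL); first exact: List.NoDup_filter.
  by move=> j /List.filter_In [_ /asboolP].
rewrite -big_filter; apply: le_trans (sum_le_const (c := dp) _) _.
  move=> j /List.filter_In [_ /asboolP jF]; rewrite /ds_pow -(powRVK (ltW dp0)).
  apply: ge0_ler_powR; first exact: ltW.
  - by rewrite nnegrE ba_norm_ge0.
  - by rewrite nnegrE powR_ge0.
  exact: ltW (xF j jF).
by rewrite ler_wpM2r ?(ltW dp0) // ler_nat size_filter_In // => j /asboolP.
Qed.

End LpSum.

Theorem proposition3p6 (R : realType) (I : Type) (U : I -> banach_algebra R) :
  (forall i, sym_pseudo_amenable (ba_ops (U i)) (fun _ => True)) ->
  (forall p : R, 1 <= p ->
     sym_pseudo_amenable (ds_ops U (lp_norm U p)) (lp_set U p)) /\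
  sym_pseudo_amenable (ds_ops U (c0_norm U)) (c0_set U).
Proof.
move=> Hi; split.
  move=> p p_ge1; apply: ds_sym_pseudo_amenable => //.
  - exact: lp_ds_inj.
  - exact: lp_norm_ds_inj.
  - exact: lp_norm_ds_inj_ge0.
  - exact: lp_small_tail.
apply: ds_sym_pseudo_amenable => //.
- exact: c0_ds_inj.
- exact: c0_norm_ds_inj.
- exact: c0_norm_ds_inj_ge0.
- exact: c0_small_tail.
Qed.
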